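(* Let $G$ be the corresponding graph of an array $A$ with reach one, let $F$ be a resulting DFS forest of $G$, and let $T$ be a component of $F$ whose root $v$ has exactly two children $a_1,b_1$ (i.e. $T$ has two sub-trees stemming from the root). Apply the sub-tree merge to $T$ and let $H$ be $T$ together with all arcs added. Then $H$ contains a directed Hamiltonian path, i.e. a directed path visiting every vertex of $T$ exactly once.
   Context: An array is a finite sequence $A=(A[1],\dots,A[n])$ of pairwise distinct real numbers. The corresponding graph of $A$ with reach one is the directed graph on $\{1,\dots,n\}$ with an arc $(i,j)$ whenever $j\equiv i\pm1\pmod n$, $j\ne i$, and $A[i]<A[j]$. DFS is run with adjacency lists sorted in increasing $A$-value and a visiting list containing all vertices; the resulting DFS forest consists of the arcs $(\mathrm{parent}(w),w)$ along which DFS discovers vertices, and its components (of the underlying undirected graph) are rooted trees. Sub-tree merge of $T$: set $p=a_1$, $q=b_1$; while both $p,q$ are defined: if $A[p]<A[q]$, add the arc $(p,q)$ and replace $p$ by its smallest-valued child in $F$ (undefined if it has none); otherwise add the arc $(q,p)$ and replace $q$ by its smallest-valued child in $F$ (undefined if none). *)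

From mathcomp Require Import all_boot all_order all_algebra.
From mathcomp Require Import reals.
Set Implicit Arguments. Unset Strict Implicit. Unset Printing Implicit Defensive.
Import Order.TTheory GRing.Theory Num.Theory.
Local Open Scope ring_scope.

Section Defs.
Variables (R : realType) (n : nat) (A : 'I_n -> R).

Definition nbr (i j : 'I_n) : bool :=
  (j != i) && ((val j == (val i).+1 %% n)%N || (val i == (val j).+1 %% n)%N).

Definition garc (i j : 'I_n) : bool := nbr i j && (A i < A j).

Definition adj (u : 'I_n) : seq 'I_n :=
  sort (fun x y => A x <= A y) [seq w <- enum 'I_n | garc u w].

(* DFS state: (visited vertices, discovery arcs (parent, child)) *)
Definition dstate := (seq 'I_n * seq ('I_n * 'I_n))%type.

Fixpoint dfs_visit (fuel : nat) (u : 'I_n) (st : dstate) : dstate :=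
  match fuel with
  | 0 => st
  | f.+1 =>
      foldl (fun (st : dstate) w =>
               if w \in st.1 then st
               else dfs_visit f w (st.1, rcons st.2 (u, w)))
            (u :: st.1, st.2) (adj u)
  end.

(* the DFS forest (as its set of arcs) produced with visiting list s *)
Definition dfs_forest (s : seq 'I_n) : seq ('I_n * 'I_n) :=
  (foldl (fun (st : dstate) v => if v \in st.1 then st else dfs_visit n v st)
         ([::], [::]) s).2.

Definition und (F : seq ('I_n * 'I_n)) : rel 'I_n :=
  fun x y => ((x, y) \in F) || ((y, x) \in F).

Definition in_comp (F : seq ('I_n * 'I_n)) (v x : 'I_n) : bool :=
  connect (und F) v x.

Definition min_child (F : seq ('I_n * 'I_n)) (u : 'I_n) : option 'I_n :=
  ohead (sort (fun x y => A x <= A y) [seq w <- enum 'I_n | (u, w) \in F]).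

(* the sub-tree merge loop; returns the added arcs. Fuel n is enough since
   each iteration moves p or q to a fresh vertex. *)
Fixpoint merge_loop (F : seq ('I_n * 'I_n)) (fuel : nat) (p q : option 'I_n)
  : seq ('I_n * 'I_n) :=
  match fuel with
  | 0 => [::]
  | f.+1 =>
      match p, q with
      | Some p', Some q' =>
          if A p' < A q' then (p', q') :: merge_loop F f (min_child F p') q
          else (q', p') :: merge_loop F f p (min_child F q')
      | _, _ => [::]
      end
  end.

Definition subtree_merge (F : seq ('I_n * 'I_n)) (a1 b1 : 'I_n) :=
  merge_loop F n (Some a1) (Some b1).

Definition H_arcs (F : seq ('I_n * 'I_n)) (v a1 b1 : 'I_n) : seq ('I_n * 'I_n) :=
  [seq e <- F | in_comp F v e.1 && in_comp F v e.2] ++ subtree_merge F a1 b1.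

Definition ham_path (H : seq ('I_n * 'I_n)) (V : pred 'I_n) : Prop :=
  exists s : seq 'I_n,
    [/\ uniq s, (forall x, (x \in s) = V x) &
        sorted (fun x y => (x, y) \in H) s].

End Defs.

From mathcomp Require Import all_boot all_order all_algebra.
From mathcomp Require Import reals.
Import Order.TTheory GRing.Theory Num.Theory.
Set Implicit Arguments. Unset Strict Implicit. Unset Printing Implicit Defensive.
Local Open Scope ring_scope.

(* Arcs of the DFS forest go from smaller to larger A-values, every vertex has
   at most one parent, and in the reach-one graph a vertex has at most two
   neighbours; so a vertex other than a root has at most one child.  Below the
   root v the tree therefore consists of two increasing chains, starting at a1
   and at b1, and the sub-tree merge is the merge of these two sorted chains.
   Listing the vertices of T by increasing A-value, two consecutive vertices
   are either consecutive on a chain (an arc of T, or v followed by a1 or b1)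
   or lie on different chains, and then the merge has added the arc between
   them. *)

Section Descendants.
Variables (T : finType) (e : rel T).

Lemma connect_first x y : connect e x y -> x != y -> exists2 c, e x c & connect e c y.
Proof.
case/connectP=> [[|c p]] /= => [_ -> | /andP[xc cp] ->]; first by rewrite eqxx.
by exists c => //; apply/connectP; exists p.
Qed.

Lemma connect_last x y : connect e x y -> x != y -> exists2 w, connect e x w & e w y.
Proof.
case/connectP=> p; elim/last_ind: p => [|p w _] /= => [_ -> | ]; first by rewrite eqxx.
rewrite rcons_path last_rcons => /andP[xp wy] -> _.
by exists (last x p) => //; apply/connectP; exists p.
Qed.

Lemma descendants_comparable z :
  (forall x c c', connect e z x -> e x c -> e x c' -> c = c') ->
  forall x y, connect e z x -> connect e z y -> connect e x y || connect e y x.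
Proof.
move=> child_uniq x y /connectP[p]; elim: p z child_uniq => [|c p IHp] z child_uniq /=.
  by move=> _ -> ->.
move=> /andP[zc cp] x_last zy; have [<- | z_ne_y] := eqVneq z y.
  by apply/orP; right; apply/connectP; exists (c :: p); rewrite /= ?zc.
have [c' zc' c'y] := connect_first zy z_ne_y.
rewrite (child_uniq z c' c (connect0 _ _) zc' zc) in c'y.
apply: (IHp c _ cp x_last c'y) => x' d d' cx'; apply: child_uniq.
exact: connect_trans (connect1 zc) cx'.
Qed.

Hypothesis parent_uniq : forall x x' y, e x y -> e x' y -> x = x'.

Lemma ancestors_comparable x y z :
  connect e x z -> connect e y z -> connect e x y || connect e y x.
Proof.
case/connectP=> p; elim/last_ind: p z => [|p c IHp] z /=.
  by move=> _ -> ->; rewrite orbT.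
rewrite rcons_path last_rcons => /andP[xp pc] -> yc.
have [y_eq_c | y_ne_c] := eqVneq y c.
  rewrite y_eq_c; apply/orP; left; apply/connectP.
  by exists (rcons p c); rewrite ?rcons_path ?xp ?last_rcons.
have [w yw wc] := connect_last yc y_ne_c.
by apply: IHp xp erefl _; rewrite (parent_uniq pc wc).
Qed.

Lemma connect_sym_root v : (forall u, ~~ e u v) ->
  connect (fun x y => e x y || e y x) v =1 connect e v.
Proof.
move=> v_root x; apply/idP/idP; last first.
  by apply: connect_sub => a b ab; apply: connect1; rewrite ab.
have sym_e : connect_sym (fun x y => e x y || e y x).
  by apply: sym_connect_sym => a b; rewrite orbC.
have closed_v : closed (fun x y => e x y || e y x) (connect e v).
  apply: intro_closed => // a b /orP[ab | ba] va; first exact: connect_trans va (connect1 ab).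
  have [a_eq_v | a_ne_v] := eqVneq v a; first by move: (v_root b); rewrite a_eq_v ba.
  by have [w vw wa] := connect_last va a_ne_v; rewrite (parent_uniq ba wa).
by move/(closed_connect closed_v); rewrite !inE connect0 => <-.
Qed.

End Descendants.

Section Consecutive.
Context {d : Order.disp_t} {R : porderType d} {T : eqType} (A : T -> R).
Local Open Scope order_scope.

Definition consecutive (S : pred T) (x y : T) :=
  A x < A y /\ forall z, S z -> ~~ (A x < A z < A y).

Lemma consecutive_sub (S S' : pred T) x y :
  subpred S S' -> consecutive S' x y -> consecutive S x y.
Proof. by move=> sub [lt_xy between]; split=> // z /sub; apply: between. Qed.

Lemma sorted_consecutive (e : rel T) s :
  sorted (fun x y => A x < A y) s ->
  (forall x y, x \in s -> y \in s -> consecutive [in s] x y -> e x y) -> sorted e s.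
Proof.
have lt_trans_A : transitive (fun x y => A x < A y) by move=> ? ? ?; apply: lt_trans.
elim: s => // x s IHs lt_xs cons_e.
have x_min : all (fun z => A x < A z) s := order_path_min lt_trans_A lt_xs.
have {}IHs : sorted e s.
  apply: IHs => [|a b a_s b_s [lt_ab between]]; first exact: path_sorted lt_xs.
  apply: cons_e; rewrite ?in_cons ?a_s ?b_s ?orbT //; split=> // z; rewrite in_cons.
  case/orP=> [/eqP-> | /between //]; apply/negP => /andP[lt_ax _].
  by move: (lt_trans lt_ax (allP x_min a a_s)); rewrite ltxx.
case: s x_min IHs lt_xs cons_e => // y s /andP[lt_xy _] IHs /= /andP[_ lt_ys] cons_e.
apply/andP; split=> //; apply: cons_e; rewrite ?in_cons ?eqxx ?orbT //; split=> // z.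
rewrite !in_cons => /or3P[/eqP-> | /eqP-> | z_s]; rewrite ?ltxx ?andbF //.
apply/negP => /andP[_ lt_zy].
by move: (lt_trans lt_zy (allP (order_path_min lt_trans_A lt_ys) z z_s)); rewrite ltxx.
Qed.

End Consecutive.

Lemma ham_path_of_consecutive (R : realType) n (A : 'I_n -> R)
    (H : seq ('I_n * 'I_n)) (V : pred 'I_n) :
  injective A -> (forall x y, V x -> V y -> consecutive A V x y -> (x, y) \in H) ->
  ham_path H V.
Proof.
move=> A_inj cons_H; set s := sort (fun x y => A x <= A y) (enum V).
have mem_s x : (x \in s) = V x by rewrite mem_sort mem_enum.
have uniq_s : uniq s by rewrite sort_uniq enum_uniq.
exists s; split=> //; apply: (sorted_consecutive (A := A)).
  have : sorted <%O (map A s).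
    rewrite lt_sorted_uniq_le map_inj_uniq // uniq_s sorted_map.
    by apply: sort_sorted => x y; apply: le_total.
  by rewrite sorted_map.
move=> x y; rewrite !mem_s => Vx Vy cons_xy; apply: cons_H => //.
by apply: consecutive_sub cons_xy => z; rewrite /= mem_s.
Qed.

Lemma map_uniq_inj_in (T1 T2 : eqType) (f : T1 -> T2) (s : seq T1) :
  uniq (map f s) -> {in s &, injective f}.
Proof.
move=> + x y x_s; case/splitPr: x_s => s1 s2.
rewrite map_cat cat_uniq /= => /and3P[_ /norP[fx_s1 _] /andP[fx_s2 _]] y_s fx_fy.
move: y_s; rewrite mem_cat in_cons => /or3P[y_s1 | /eqP // | y_s2].
  by move: fx_s1; rewrite fx_fy map_f.
by move: fx_s2; rewrite fx_fy map_f.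
Qed.

Section DepthFirstSearch.
Variables (R : realType) (n : nat) (A : 'I_n -> R).

Definition dfs_inv (st : dstate n) :=
  [/\ uniq st.1, uniq (map snd st.2), {subset map snd st.2 <= st.1}
    & all (fun a => garc A a.1 a.2) st.2].

Lemma dfs_inv_push (st : dstate n) v :
  dfs_inv st -> v \notin st.1 -> dfs_inv (v :: st.1, st.2).
Proof.
case=> uniq1 uniq2 sub arcs v_new; split=> //=; first by rewrite v_new uniq1.
by move=> x /sub; rewrite in_cons orbC => ->.
Qed.

Lemma dfs_inv_discover (st : dstate n) u w :
  dfs_inv st -> w \notin st.1 -> garc A u w -> dfs_inv (w :: st.1, rcons st.2 (u, w)).
Proof.
case=> uniq1 uniq2 sub arcs w_new uw; split=> /=; rewrite ?w_new ?uniq1 //.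
- by rewrite map_rcons rcons_uniq uniq2 andbT; apply: contra w_new => /sub.
- by move=> x; rewrite map_rcons mem_rcons !in_cons => /orP[-> // | /sub ->]; rewrite orbT.
- by rewrite all_rcons uw.
Qed.

(* The fuel bound guarantees that a discovered vertex is actually visited;
   otherwise it could be discovered a second time. *)
Definition dfs_visit_spec f := forall u (st : dstate n),
  dfs_inv (u :: st.1, st.2) -> (n <= size st.1 + f)%N ->
  dfs_inv (dfs_visit A f u st) /\ {subset u :: st.1 <= (dfs_visit A f u st).1}.

Lemma dfs_children_ok f u (V : seq 'I_n) l (st : dstate n) :
  dfs_visit_spec f -> all (garc A u) l -> uniq V -> (n <= size V + f)%N ->
  dfs_inv st -> {subset V <= st.1} ->
  let st' := foldl (fun st w => if w \in st.1 then st
                                else dfs_visit A f w (st.1, rcons st.2 (u, w))) st l in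
  dfs_inv st' /\ {subset V <= st'.1}.
Proof.
move=> visit_ok; elim: l st => [|w l IHl] st //= /andP[uw ul] uniq_V fuel inv sub.
case: ifPn => [_ | w_new]; first exact: IHl.
have [inv' sub'] := visit_ok w (st.1, rcons st.2 (u, w)) (dfs_inv_discover inv w_new uw)
  (leq_trans fuel (leq_add (uniq_leq_size uniq_V sub) (leqnn f))).
by apply: IHl => // x /sub x_st; apply: sub'; rewrite in_cons x_st orbT.
Qed.

Lemma dfs_visit_ok f : dfs_visit_spec f.
Proof.
elim: f => [|f IHf] u st inv fuel /=.
  case: inv => /card_uniqP size_u _ _ _; move: (max_card (mem (u :: st.1))).
  by rewrite size_u card_ord /= ltnNge -(addn0 (size _)) fuel.
apply: dfs_children_ok => //; first by rewrite all_sort filter_all.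
- by case: inv.
- by rewrite /= addSn -addnS.
Qed.

Lemma dfs_forest_inv s :
  dfs_inv (foldl (fun (st : dstate n) v => if v \in st.1 then st else dfs_visit A n v st)
                 ([::], [::]) s).
Proof.
have : dfs_inv (([::], [::]) : dstate n) by [].
elim: s ([::], [::]) => //= v s IHs st inv; apply: IHs; case: ifPn => // v_new.
by case: (dfs_visit_ok (dfs_inv_push inv v_new) (leq_addl _ _)).
Qed.

Lemma dfs_forest_garc s x y : (x, y) \in dfs_forest A s -> garc A x y.
Proof. by case: (dfs_forest_inv s) => _ _ _ /allP arcs /arcs. Qed.

Lemma dfs_forest_parent_uniq s x x' y :
  (x, y) \in dfs_forest A s -> (x', y) \in dfs_forest A s -> x = x'.
Proof.
case: (dfs_forest_inv s) => _ /map_uniq_inj_in snd_inj _ _ xy x'y.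
by case: (snd_inj _ _ xy x'y erefl).
Qed.

End DepthFirstSearch.

Lemma nbr_sym n (i j : 'I_n) : nbr i j = nbr j i.
Proof. by rewrite /nbr eq_sym orbC. Qed.

Lemma nbr_succ_pred n (u j : 'I_n) : nbr u j -> j = ordS u \/ j = ord_pred u.
Proof.
case/andP=> _ /orP[] /eqP j_u; [left | right]; first exact: val_inj.
by rewrite -[j]ordSK; congr ord_pred; apply: val_inj.
Qed.

Lemma nbr_pigeonhole n (u x y z : 'I_n) :
  nbr u x -> nbr u y -> nbr u z -> [|| x == y, x == z | y == z].
Proof.
by move=> /nbr_succ_pred[]-> /nbr_succ_pred[]-> /nbr_succ_pred[]->; rewrite !eqxx ?orbT.
Qed.

Lemma garc_child_uniq (R : realType) n (A : 'I_n -> R) (w x c c' : 'I_n) :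
  garc A w x -> garc A x c -> garc A x c' -> c = c'.
Proof.
move=> /andP[wx lt_wx] /andP[xc lt_xc] /andP[xc' lt_xc'].
have /or3P[] := nbr_pigeonhole (etrans (nbr_sym x w) wx) xc xc'; [| | by move/eqP].
- by move/eqP=> w_c; move: (lt_trans lt_wx lt_xc); rewrite w_c ltxx.
- by move/eqP=> w_c'; move: (lt_trans lt_wx lt_xc'); rewrite w_c' ltxx.
Qed.

Section SubtreeMerge.
Variables (R : realType) (n : nat) (A : 'I_n -> R) (F : seq ('I_n * 'I_n)).
Hypothesis A_inj : injective A.
Hypothesis arc_lt : forall x y, (x, y) \in F -> A x < A y.
Hypothesis parent_uniq : forall x x' y, (x, y) \in F -> (x', y) \in F -> x = x'.
Hypothesis child_uniq :
  forall w x c c', (w, x) \in F -> (x, c) \in F -> (x, c') \in F -> c = c'.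

Local Notation desc := (connect (fun x y => (x, y) \in F)).

Definition subtrees p q := [pred z | desc p z || desc q z].

Definition across p q x y := desc p x && desc q y || desc q x && desc p y.

Lemma subtreesC p q : subtrees p q =i subtrees q p.
Proof. by move=> z; rewrite !inE orbC. Qed.

Lemma acrossC p q x y : across p q x y = across q p x y.
Proof. by rewrite /across orbC. Qed.

Lemma neq_of_lt x y : A x < A y -> x != y.
Proof. by move=> lt_xy; apply: contraTneq lt_xy => ->; rewrite ltxx. Qed.

Lemma desc_le x y : desc x y -> A x <= A y.
Proof.
case/connectP=> p; elim: p x => [|c p IHp] x /= => [_ -> // | /andP[xc cp] y_last].
exact: le_trans (ltW (arc_lt xc)) (IHp c cp y_last).
Qed.

Lemma desc_lt x y : desc x y -> x != y -> A x < A y.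
Proof. by move=> xy x_ne_y; rewrite lt_neqAle desc_le // andbT (inj_eq A_inj). Qed.

Lemma desc_consecutive_arc (S : pred 'I_n) x y :
  subpred (desc x) S -> desc x y -> consecutive A S x y -> (x, y) \in F.
Proof.
move=> sub xy [lt_xy between].
have [c xc cy] := connect_first xy (neq_of_lt lt_xy).
have [<- // | c_ne_y] := eqVneq c y.
by move: (between c (sub c (connect1 xc))); rewrite arc_lt // desc_lt.
Qed.

Lemma desc_has_parent w c x : (w, c) \in F -> desc c x -> exists w', (w', x) \in F.
Proof.
move=> wc cx; have [<- | c_ne_x] := eqVneq c x; first by exists w.
by have [w' _ w'x] := connect_last cx c_ne_x; exists w'.
Qed.

Lemma subtree_chain w c x y : (w, c) \in F -> desc c x -> desc c y -> desc x y || desc y x.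
Proof.
move=> wc; apply: descendants_comparable => x' d d' cx'.
by have [w' w'x'] := desc_has_parent wc cx'; apply: child_uniq w'x'.
Qed.

Lemma min_child_next w p x : (w, p) \in F -> desc p x -> p != x ->
  exists2 c, min_child A F p = Some c & (p, c) \in F /\ desc c x.
Proof.
move=> wp px p_ne_x; have [c pc cx] := connect_first px p_ne_x.
rewrite /min_child; set l := sort _ _.
have mem_l z : (z \in l) = ((p, z) \in F) by rewrite mem_sort mem_filter mem_enum andbT.
clearbody l; case: l mem_l => [|c' l] mem_l; first by move: (mem_l c); rewrite pc.
have pc' : (p, c') \in F by rewrite -mem_l mem_head.
by exists c' => //; rewrite (child_uniq wp pc' pc).
Qed.

Lemma card_subtrees_child p c q :
  (p, c) \in F -> A p < A q -> (#|subtrees c q| < #|subtrees p q|)%N.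
Proof.
move=> pc lt_pq; rewrite (cardD1 p (subtrees p q)) inE connect0 add1n ltnS.
apply/subset_leq_card/subsetP => z; rewrite !inE => /orP[cz | qz].
  rewrite (connect_trans (connect1 pc) cz) andbT eq_sym neq_of_lt //.
  exact: lt_le_trans (arc_lt pc) (desc_le cz).
by rewrite qz orbT andbT eq_sym neq_of_lt // (lt_le_trans lt_pq (desc_le qz)).
Qed.

Lemma merge_step w p q x y : (w, p) \in F -> A p < A q ->
  consecutive A (subtrees p q) x y -> across p q x y ->
  (x, y) = (p, q) \/ exists2 c, min_child A F p = Some c & (p, c) \in F /\ across c q x y.
Proof.
move=> wp lt_pq [lt_xy between] /orP[/andP[px qy] | /andP[qx py]].
- have [p_eq_x | p_ne_x] := eqVneq p x.
    subst x; left; have [<- // | q_ne_y] := eqVneq q y.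
    by move: (between q); rewrite inE connect0 orbT lt_pq desc_lt // => /(_ isT).
  have [c mc [pc cx]] := min_child_next wp px p_ne_x.
  by right; exists c; rewrite /across ?cx ?qy.
- have p_ne_y : p != y.
    by rewrite neq_of_lt // (lt_le_trans lt_pq (le_trans (desc_le qx) (ltW lt_xy))).
  have [c mc [pc cy]] := min_child_next wp py p_ne_y.
  by right; exists c; rewrite /across ?qx ?cy ?orbT.
Qed.

Lemma merge_loop_across f w w' p q x y :
  (w, p) \in F -> (w', q) \in F -> (forall z, desc p z -> ~~ desc q z) ->
  (#|subtrees p q| <= f)%N -> consecutive A (subtrees p q) x y -> across p q x y ->
  (x, y) \in merge_loop A F f (Some p) (Some q).
Proof.
elim: f w w' p q => [|f IHf] w w' p q wp wq disj size_f cons_xy across_xy.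
  by move: size_f; rewrite leqn0 => /eqP/card0_eq/(_ p); rewrite !inE connect0.
rewrite /=; case: ifPn => [lt_pq | ge_pq].
  have [-> | [c mc [pc across_c]]] := merge_step wp lt_pq cons_xy across_xy.
    exact: mem_head.
  rewrite mc in_cons; apply/orP; right; apply: (IHf p w' c q) => //.
  - by move=> z cz; apply: disj; apply: connect_trans (connect1 pc) cz.
  - by rewrite -ltnS (leq_trans (card_subtrees_child pc lt_pq)).
  - by apply: consecutive_sub cons_xy => z; rewrite !inE => /orP[cz | ->];
      rewrite ?(connect_trans (connect1 pc) cz) ?orbT.
have lt_qp : A q < A p.
  rewrite lt_neqAle (inj_eq A_inj) leNgt ge_pq andbT.
  by apply: contraNneq (disj p (connect0 _ p)) => <-; apply: connect0.
have cons_yx : consecutive A (subtrees q p) x y.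
  by apply: consecutive_sub cons_xy => z; rewrite /= orbC.
have [[-> ->] | [c mc [qc across_c]]] :=
  merge_step wq lt_qp cons_yx (etrans (acrossC q p x y) across_xy).
  exact: mem_head.
rewrite mc in_cons; apply/orP; right; apply: (IHf w q p c) => //; last by rewrite acrossC.
- by move=> z pz; apply: contra (disj z pz); apply: connect_trans (connect1 qc).
- rewrite (eq_card (subtreesC p q)) in size_f.
  by rewrite -ltnS (eq_card (subtreesC p c)) (leq_trans (card_subtrees_child qc lt_qp)).
- by apply: consecutive_sub cons_xy => z; rewrite !inE => /orP[-> | cz];
    rewrite ?(connect_trans (connect1 qc) cz) ?orbT.
Qed.

Variables (v a1 b1 : 'I_n).
Hypothesis v_root : forall u, (u, v) \notin F.
Hypothesis a1_neq_b1 : a1 != b1.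
Hypothesis v_children : forall w, ((v, w) \in F) = (w == a1) || (w == b1).

Lemma v_a1 : (v, a1) \in F. Proof. by rewrite v_children eqxx. Qed.
Lemma v_b1 : (v, b1) \in F. Proof. by rewrite v_children eqxx orbT. Qed.

Lemma desc_root x : desc v x = [|| x == v, desc a1 x | desc b1 x].
Proof.
apply/idP/idP => [vx | /or3P[/eqP-> | a1x | b1x]].
- have [// | v_ne_x] := eqVneq v x.
  have [c vc cx] := connect_first vx v_ne_x.
  by move: vc; rewrite v_children => /orP[] /eqP c_eq; rewrite -c_eq cx ?orbT.
- exact: connect0.
- exact: connect_trans (connect1 v_a1) a1x.
- exact: connect_trans (connect1 v_b1) b1x.
Qed.

Lemma root_child_desc c c' : (v, c) \in F -> (v, c') \in F -> desc c c' -> c = c'.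
Proof.
move=> vc vc' cc'; apply/eqP; apply/negPn/negP => c_ne_c'.
have [w cw wc'] := connect_last cc' c_ne_c'.
rewrite (parent_uniq wc' vc') in cw.
by move: (lt_le_trans (arc_lt vc) (desc_le cw)); rewrite ltxx.
Qed.

Lemma subtrees_disjoint z : desc a1 z -> ~~ desc b1 z.
Proof.
move=> a1z; apply/negP => b1z; move/negP: a1_neq_b1; apply.
case/orP: (ancestors_comparable parent_uniq a1z b1z) => [a1b1 | b1a1].
  by rewrite (root_child_desc v_a1 v_b1 a1b1).
by rewrite (root_child_desc v_b1 v_a1 b1a1).
Qed.

Lemma not_desc_across x y :
  desc v x -> desc v y -> A x < A y -> ~~ desc x y -> across a1 b1 x y.
Proof.
move=> vx vy lt_xy not_xy.
have chain_across c : (v, c) \in F -> desc c x -> desc c y -> False.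
  move=> vc cx cy; case/orP: (subtree_chain vc cx cy) => [xy | yx].
    by rewrite xy in not_xy.
  by move: (lt_le_trans lt_xy (desc_le yx)); rewrite ltxx.
have x_ne_v : x != v by apply: contraNneq not_xy => ->.
have y_ne_v : y != v.
  by rewrite eq_sym neq_of_lt // (le_lt_trans (desc_le vx) lt_xy).
move: vx vy; rewrite !desc_root (negPf x_ne_v) (negPf y_ne_v) /across /=.
case/orP=> [a1x | b1x] /orP[a1y | b1y].
- by case: (chain_across a1 v_a1 a1x a1y).
- by rewrite a1x b1y.
- by rewrite a1y b1x orbT.
- by case: (chain_across b1 v_b1 b1x b1y).
Qed.

Lemma H_arcs_consecutive x y :
  in_comp F v x -> in_comp F v y -> consecutive A (in_comp F v) x y ->
  (x, y) \in H_arcs A F v a1 b1.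
Proof.
have compE : in_comp F v =1 desc v.
  exact: (connect_sym_root (e := fun x y => (x, y) \in F) parent_uniq v_root).
rewrite !compE => vx vy cons_xy.
have {}cons_xy : consecutive A (desc v) x y.
  by apply: consecutive_sub cons_xy => z; rewrite compE.
rewrite mem_cat; have [xy | not_xy] := boolP (desc x y).
  rewrite mem_filter /= !compE vx vy (desc_consecutive_arc _ xy cons_xy) //.
  by move=> z; apply: connect_trans vx.
apply/orP; right; apply: (merge_loop_across v_a1 v_b1 subtrees_disjoint).
- by rewrite (leq_trans (max_card _)) ?card_ord.
- apply: consecutive_sub cons_xy => z; rewrite inE => /orP[a1z | b1z].
    exact: connect_trans (connect1 v_a1) a1z.
  exact: connect_trans (connect1 v_b1) b1z.
- by apply: not_desc_across => //; case: cons_xy.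
Qed.

End SubtreeMerge.

Unset Implicit Arguments.

Theorem theorem9 (R : realType) (n : nat) (A : 'I_n -> R)
  (s : seq 'I_n) (v a1 b1 : 'I_n) :
  injective A ->
  (forall x, x \in s) ->
  let F := dfs_forest A s in
  (forall u, (u, v) \notin F) ->
  a1 != b1 ->
  (forall w, ((v, w) \in F) = (w == a1) || (w == b1)) ->
  ham_path (H_arcs A F v a1 b1) (in_comp F v).
Proof.
(* The visiting list need not cover all vertices: only the DFS invariants are used. *)
move=> A_inj _ F v_root a1_neq_b1 v_children.
have arc_garc x y : (x, y) \in F -> garc A x y := @dfs_forest_garc R n A s x y.
have arc_lt x y : (x, y) \in F -> A x < A y by case/arc_garc/andP.
have parent_uniq x x' y : (x, y) \in F -> (x', y) \in F -> x = x'.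
  exact: dfs_forest_parent_uniq.
have child_uniq w x c c' : (w, x) \in F -> (x, c) \in F -> (x, c') \in F -> c = c'.
  by move=> /arc_garc wx /arc_garc xc /arc_garc xc'; apply: garc_child_uniq wx xc xc'.
apply: (ham_path_of_consecutive A_inj) => x y.
exact: (H_arcs_consecutive A_inj arc_lt parent_uniq child_uniq).
Qed.
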